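(* Let $g:\mathbb{R}^m\to\mathbb{R}$ be a continuous convex function and $X\subset\mathbb{R}^m$ a closed convex set, and suppose $\mathbf{X}^*=\{x\in X: g(x)\le0\}$ is non-empty. Assume there is $K\ge0$ with $\|\nabla g^+(x)\|\le K$ for all $x$. Let $\{\alpha(t)\},\{\beta(t)\}$ satisfy (a) $\alpha(t)\in[0,1]$, $\sum_{t=0}^\infty\alpha(t)=\infty$, $\sum_{t=0}^\infty\alpha^2(t)<\infty$; (b) $\beta(t)\ge0$, $\sum_{t=0}^\infty\beta(t)=\infty$, $\sum_{t=0}^\infty\beta^2(t)<\infty$. Define the iteration $$\xi(t)=x(t)-\beta(t)\nabla g^+(x(t)),\quad \varphi(t)=\alpha(t)\big(\xi(t)-P_X(\xi(t))\big),\quad x(t+1)=\xi(t)-\varphi(t).$$ Then $x(t)$ converges to a vector $x^*\in\mathbf{X}^*$.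
   Context: $g^+(x)=\max[g(x),0]$; $\nabla g^+(x)$ denotes a subgradient of $g^+$ at $x$; $P_X$ is the Euclidean projection onto $X$. *)

From HB Require Import structures.
From mathcomp Require Import all_boot all_order all_algebra.
From mathcomp Require Import all_classical all_reals all_analysis.
Set Implicit Arguments. Unset Strict Implicit. Unset Printing Implicit Defensive.
Import Order.TTheory GRing.Theory Num.Theory.
Import numFieldNormedType.Exports.
Local Open Scope ring_scope.
Local Open Scope classical_set_scope.

Section Defs.
Variables (R : realType) (m : nat).

Definition dotv (u v : 'rV[R]_m) : R := \sum_(i < m) u 0 i * v 0 i.
Definition enorm (u : 'rV[R]_m) : R := Num.sqrt (dotv u u).

Definition convex_fun (g : 'rV[R]_m -> R) : Prop :=
  forall x y (a : R), 0 <= a <= 1 ->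
    g (a *: x + (1 - a) *: y) <= a * g x + (1 - a) * g y.

Definition gplus (g : 'rV[R]_m -> R) (x : 'rV[R]_m) : R := Num.max (g x) 0.

Definition is_subgradient (f : 'rV[R]_m -> R) (x d : 'rV[R]_m) : Prop :=
  forall y, f x + dotv d (y - x) <= f y.

Definition is_projection (X : set 'rV[R]_m) (P : 'rV[R]_m -> 'rV[R]_m) : Prop :=
  forall z, X (P z) /\ forall y, X y -> enorm (z - P z) <= enorm (z - y).

End Defs.

(* For every feasible z the iteration is quasi-Fejer monotone:
   |x(t+1) - z|^2 <= |x(t) - z|^2 - descent(t) + beta(t)^2 K^2, where
   descent(t) = 2 beta(t) g^+(x(t)) + alpha(t) dist(xi(t), X)^2 >= 0.  Hence the
   iterates are bounded and sum descent(t) < oo; as sum alpha = sum beta = oo, an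
   excursion argument shows that g^+(x(t)) + dist(x(t), X) is small infinitely often.
   A cluster point of these iterates is feasible, and quasi-Fejer monotonicity with
   respect to it forces the whole sequence to converge to it. *)

From HB Require Import structures.
From mathcomp Require Import all_boot all_order all_algebra.
From mathcomp Require Import all_classical all_reals all_analysis.
From mathcomp Require Import ring lra.
Set Implicit Arguments. Unset Strict Implicit. Unset Printing Implicit Defensive.
Import Order.TTheory GRing.Theory Num.Theory.
Import numFieldNormedType.Exports.
Local Open Scope ring_scope.
Local Open Scope classical_set_scope.

Section Euclid.
Variables (R : realType) (m : nat).
Implicit Types (u v w : 'rV[R]_m).

Lemma dotvC u v : dotv u v = dotv v u.
Proof. by apply: eq_bigr => i _; rewrite mulrC. Qed.

Lemma dotvDl u w v : dotv (u + w) v = dotv u v + dotv w v.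
Proof. by rewrite /dotv -big_split; apply: eq_bigr => i _; rewrite mxE mulrDl. Qed.

Lemma dotvZl (a : R) u v : dotv (a *: u) v = a * dotv u v.
Proof. by rewrite /dotv mulr_sumr; apply: eq_bigr => i _; rewrite mxE mulrA. Qed.

Lemma dotvNl u v : dotv (- u) v = - dotv u v.
Proof. by rewrite -scaleN1r dotvZl mulN1r. Qed.

Lemma dotvBl u w v : dotv (u - w) v = dotv u v - dotv w v.
Proof. by rewrite dotvDl dotvNl. Qed.

Lemma dotvDr u w v : dotv v (u + w) = dotv v u + dotv v w.
Proof. by rewrite dotvC dotvDl !(dotvC v). Qed.

Lemma dotvZr (a : R) u v : dotv v (a *: u) = a * dotv v u.
Proof. by rewrite dotvC dotvZl dotvC. Qed.

Lemma dotvNr u v : dotv v (- u) = - dotv v u.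
Proof. by rewrite dotvC dotvNl dotvC. Qed.

Lemma dotvBr u w v : dotv v (u - w) = dotv v u - dotv v w.
Proof. by rewrite dotvC dotvBl !(dotvC v). Qed.

Lemma dotvv_ge0 u : 0 <= dotv u u.
Proof. by apply: sumr_ge0 => i _; rewrite -expr2 sqr_ge0. Qed.

Lemma dotvv_eq0 u : (dotv u u == 0) = (u == 0).
Proof.
apply/idP/eqP => [|->]; last by rewrite /dotv big1 // => i _; rewrite mxE mulr0.
rewrite psumr_eq0 => [/allP u0|i _]; last by rewrite -expr2 sqr_ge0.
apply/rowP => i; rewrite mxE.
by have /implyP/(_ isT) := u0 i (mem_index_enum i); rewrite mulf_eq0 orbb => /eqP.
Qed.

Lemma dotv0r u : dotv u 0 = 0.
Proof. by rewrite -(scale0r 0) dotvZr mul0r. Qed.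

Lemma dotvvD u v : dotv (u + v) (u + v) = dotv u u + 2 * dotv u v + dotv v v.
Proof. by rewrite !(dotvDl, dotvDr) (dotvC v u); ring. Qed.

Lemma dotvvB u v : dotv (u - v) (u - v) = dotv u u - 2 * dotv u v + dotv v v.
Proof. by rewrite !(dotvBl, dotvBr) (dotvC v u); ring. Qed.

Lemma enorm_ge0 u : 0 <= enorm u.
Proof. exact: sqrtr_ge0. Qed.

Lemma sqr_enorm u : enorm u ^+ 2 = dotv u u.
Proof. by rewrite sqr_sqrtr // dotvv_ge0. Qed.

Lemma enorm_eq0 u : (enorm u == 0) = (u == 0).
Proof. by rewrite sqrtr_eq0 le_eqVlt ltNge dotvv_ge0 orbF dotvv_eq0. Qed.

Lemma ler_enorm u v : (enorm u <= enorm v) = (dotv u u <= dotv v v).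
Proof. by rewrite -ler_sqr ?nnegrE ?enorm_ge0 // !sqr_enorm. Qed.

Lemma enormZ (a : R) u : enorm (a *: u) = `|a| * enorm u.
Proof.
by rewrite /enorm dotvZl dotvZr mulrA -expr2 sqrtrM ?sqr_ge0 // sqrtr_sqr.
Qed.

Lemma enormN u : enorm (- u) = enorm u.
Proof. by rewrite -scaleN1r enormZ normrN1 mul1r. Qed.

Lemma enorm_distC u v : enorm (u - v) = enorm (v - u).
Proof. by rewrite -enormN opprB. Qed.

Lemma normr_dotv_le u v : `|dotv u v| <= enorm u * enorm v.
Proof.
rewrite -ler_sqr ?nnegrE ?mulr_ge0 ?enorm_ge0 // real_normK ?num_real //.
rewrite exprMn !sqr_enorm.
have [/eqP v0|v_neq0] := eqVneq (dotv v v) 0.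
  by move: v0; rewrite dotvv_eq0 => /eqP ->; rewrite !dotv0r expr0n mulr0.
(* Expand [0 <= |<v,v> u - <u,v> v|^2 = <v,v> (<u,u><v,v> - <u,v>^2)]. *)
have vv_gt0 : 0 < dotv v v by rewrite lt_def v_neq0 dotvv_ge0.
have := dotvv_ge0 (dotv v v *: u - dotv u v *: v).
rewrite !(dotvBl, dotvBr, dotvZl, dotvZr) (dotvC v u) => h.
have : 0 <= dotv v v * (dotv v v * dotv u u - dotv u v ^+ 2) by nra.
by rewrite pmulr_rge0 // subr_ge0 mulrC.
Qed.

Lemma dotv_le u v : dotv u v <= enorm u * enorm v.
Proof. exact: le_trans (ler_norm _) (normr_dotv_le u v). Qed.

Lemma ler_enormD u v : enorm (u + v) <= enorm u + enorm v.
Proof.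
rewrite -ler_sqr ?nnegrE ?addr_ge0 ?enorm_ge0 // sqrrD !sqr_enorm dotvvD.
by have := dotv_le u v; lra.
Qed.

Lemma coord_le_mx_norm u i : `|u 0 i| <= `|u|.
Proof.
rewrite [`|u|]mx_normrE.
exact: (le_bigmax _ (fun ij : 'I_1 * 'I_m => `|u ij.1 ij.2|) (0, i)).
Qed.

Lemma mx_norm_le_enorm u : `|u| <= enorm u.
Proof.
rewrite [`|u|]mx_normrE; apply: bigmax_le => [|[a j] _ /=]; first exact: enorm_ge0.
rewrite (ord1 a) -ler_sqr ?nnegrE ?enorm_ge0 // sqr_enorm real_normK ?num_real //.
rewrite /dotv (bigD1 j) //= -expr2 lerDl.
by apply: sumr_ge0 => i _; rewrite -expr2 sqr_ge0.
Qed.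

Lemma enorm_le_mx_norm u : enorm u <= Num.sqrt m%:R * `|u|.
Proof.
rewrite -[X in _ * X]ger0_norm // -sqrtr_sqr -sqrtrM // ler_sqrt ?mulr_ge0 ?sqr_ge0 //.
have -> : m%:R * `|u| ^+ 2 = \sum_(i < m) `|u| ^+ 2.
  by rewrite sumr_const card_ord mulr_natl.
apply: ler_sum => i _.
by rewrite -expr2 -real_normK ?num_real // lerXn2r ?nnegrE // coord_le_mx_norm.
Qed.
End Euclid.

Ltac row_ring := apply/rowP => ?; rewrite !mxE; ring.

Section Projection.
Variables (R : realType) (m : nat) (X : set 'rV[R]_m) (P : 'rV[R]_m -> 'rV[R]_m).
Hypothesis projP : is_projection X P.

Lemma dist_proj_lipschitz y y' : enorm (y - P y) <= enorm (y' - P y') + enorm (y - y').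
Proof.
have [/(projP y).2 le_dist _] := projP y'.
apply: le_trans le_dist _.
by rewrite (_ : y - P y' = y' - P y' + (y - y')) ?ler_enormD //; row_ring.
Qed.

Hypothesis convX : convex_set X.

Lemma dotv_proj_le0 y z : X z -> dotv (y - P y) (z - P y) <= 0.
Proof.
move=> Xz; have [XPy Pmin] := projP y.
set c := dotv (y - P y) (z - P y); set q := dotv (z - P y) (z - P y).
(* Moving from [P y] towards [z] by [s] cannot decrease the distance to [y]. *)
have small_step s : 0 < s <= 1 -> 2 * c <= s * q.
  case/andP=> s_gt0 s_le1.
  have Xs : X (s *: z + (1 - s) *: P y).
    by move: (@convX z (P y) (Itv01 (ltW s_gt0) s_le1)); rewrite !inE; apply.
  have := Pmin _ Xs; rewrite ler_enorm.
  rewrite (_ : y - (s *: z + _) = (y - P y) - s *: (z - P y)); last by row_ring.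
  rewrite [X in _ <= X]dotvvB !(dotvZr, dotvZl) -/c -/q => h.
  by rewrite -(ler_pM2l s_gt0); lra.
rewrite leNgt; apply/negP => c_gt0.
have q_ge0 : 0 <= q by apply: dotvv_ge0.
have cq_gt0 : 0 < c + q by lra.
have := small_step (c / (c + q)).
rewrite divr_gt0 // ler_pdivrMr // mul1r lerDl q_ge0 => /(_ isT).
by rewrite mulrAC ler_pdivlMr //; nra.
Qed.

Lemma relaxed_proj_fejer y z (a : R) : X z -> 0 <= a <= 1 ->
  dotv (y - a *: (y - P y) - z) (y - a *: (y - P y) - z)
    <= dotv (y - z) (y - z) - a * dotv (y - P y) (y - P y).
Proof.
move=> Xz /andP[a_ge0 a_le1].
have obtuse := dotv_proj_le0 y Xz.
rewrite (_ : y - _ - z = (y - z) - a *: (y - P y)); last by row_ring.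
rewrite [X in X <= _]dotvvB !(dotvZl, dotvZr).
have -> : dotv (y - z) (y - P y)
    = dotv (y - P y) (y - P y) - dotv (y - P y) (z - P y).
  by rewrite -dotvBr dotvC; congr dotv; row_ring.
have : 0 <= a * ((1 - a) * dotv (y - P y) (y - P y)).
  by rewrite !mulr_ge0 ?subr_ge0 ?dotvv_ge0.
have : a * dotv (y - P y) (z - P y) <= 0 by rewrite mulr_ge0_le0.
lra.
Qed.

End Projection.

Section Subgradient.
Variables (R : realType) (m : nat) (f : 'rV[R]_m -> R).

Lemma subgradient_lipschitz (G : 'rV[R]_m -> 'rV[R]_m) (K : R) :
  (forall y, is_subgradient f y (G y)) -> (forall y, enorm (G y) <= K) ->
  forall y y', f y <= f y' + K * enorm (y - y').
Proof.
move=> subG GK y y'; have := subG y y'.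
have := normr_dotv_le (G y) (y' - y); rewrite -enorm_distC.
have : enorm (G y) * enorm (y - y') <= K * enorm (y - y').
  by rewrite ler_wpM2r ?enorm_ge0.
have := ler_norm (- dotv (G y) (y' - y)); rewrite normrN.
lra.
Qed.

Lemma subgradient_step y d z (b : R) : is_subgradient f y d -> 0 <= b ->
  dotv (y - b *: d - z) (y - b *: d - z)
    <= dotv (y - z) (y - z) - 2 * b * (f y - f z) + b ^+ 2 * dotv d d.
Proof.
move=> subd b_ge0; have le_fz := subd z.
rewrite -opprB dotvNr (dotvC d) in le_fz.
rewrite (_ : y - b *: d - z = (y - z) - b *: d); last by row_ring.
rewrite [X in X <= _]dotvvB !(dotvZl, dotvZr).
have : b * (f y - f z) <= b * dotv (y - z) d by rewrite ler_wpM2l //; lra.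
lra.
Qed.
End Subgradient.

Section RealSequences.
Variable R : realType.
Implicit Types (u a b c d : nat -> R).

Lemma ler_sum_increments u b s n : (forall t, u t.+1 <= u t + b t) ->
  (s <= n)%N -> u n <= u s + \sum_(s <= t < n) b t.
Proof.
move=> incr; elim: n => [|n IH].
  by rewrite leqn0 => /eqP ->; rewrite big_geq ?addr0.
rewrite leq_eqVlt ltnS => /orP[/eqP <-|sn]; first by rewrite big_geq ?addr0.
by rewrite big_nat_recr //=; have := IH sn; have := incr n; lra.
Qed.

Lemma cvg_series_tail u : cvgn (series u) -> forall e, 0 < e ->
  exists N, forall s n, (N <= s)%N -> (s <= n)%N -> `|\sum_(s <= t < n) u t| < e.
Proof.
move=> /cvg_cauchy /cauchy_seriesP u_cauchy e e_gt0.
have [[A B] /= [[N1 _ A_N1] [N2 _ B_N2]] AB_small] := u_cauchy e e_gt0.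
exists (maxn N1 N2) => s n Ns sn; apply: (AB_small (s, n)); split => /=.
  by apply: A_N1; exact: leq_trans (leq_maxl _ _) Ns.
by apply: B_N2; exact: leq_trans (leq_maxr _ _) (leq_trans Ns sn).
Qed.

Lemma divergent_weight_lt_often a c : (forall t, 0 <= a t) ->
  series a @ \oo --> +oo -> cvgn (series (fun t => a t * c t)) ->
  forall eps s, 0 < eps -> exists t, (s <= t)%N /\ c t < eps.
Proof.
move=> a_ge0 a_oo ac_cvg eps s eps_gt0.
have [N ac_tail] := cvg_series_tail ac_cvg ltr01.
apply: contrapT => /forallNP never.
set s' := maxn s N.
have c_ge t : (s' <= t)%N -> eps <= c t.
  move=> s't; rewrite leNgt; apply/negP => ct; apply: (never t); split => //.
  exact: leq_trans (leq_maxl _ _) s't.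
have /cvgryPgt /(_ (series a s' + eps^-1)) [M _ a_big] := a_oo.
set n := maxn s' M.
have s'n : (s' <= n)%N by apply: leq_maxl.
have := a_big n (leq_maxr _ _).
rewrite -(subrK (series a s') (series a n)) sub_series_geq //.
rewrite [X in _ < X]addrC ltrD2l -(ltr_pM2l eps_gt0) mulfV ?gt_eqF // => a_tail_big.
have : eps * \sum_(s' <= t < n) a t <= \sum_(s' <= t < n) a t * c t.
  rewrite mulr_sumr; apply: ler_sum_nat => t /andP[s't _].
  by rewrite mulrC ler_wpM2l // c_ge.
have := ac_tail s' n (leq_maxr _ _) s'n.
have := ler_norm (\sum_(s' <= t < n) a t * c t).
lra.
Qed.

Lemma quasi_fejer_cvg0 d b : (forall t, 0 <= d t) -> cvgn (series b) ->
  (forall s t, (s <= t)%N -> d t <= d s + \sum_(s <= i < t) b i) ->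
  (forall e N, 0 < e -> exists t, (N <= t)%N /\ d t < e) ->
  d @ \oo --> 0.
Proof.
move=> d_ge0 b_cvg d_le d_small; apply/cvgr0Pnorm_lt => e e_gt0.
have e2_gt0 : 0 < e / 2 by rewrite divr_gt0.
have [N b_tail] := cvg_series_tail b_cvg e2_gt0.
have [s [Ns ds]] := d_small _ N e2_gt0.
exists s => // t /= st; rewrite ger0_norm //.
have := d_le s t st; have := b_tail s t Ns st.
have := ler_norm (\sum_(s <= i < t) b i).
lra.
Qed.

End RealSequences.

Section Excursion.
Variables (R : realType) (alpha beta f d e : nat -> R) (K : R).
Hypotheses (alpha_ge0 : forall t, 0 <= alpha t) (beta_ge0 : forall t, 0 <= beta t)
  (e_ge0 : forall t, 0 <= e t) (K_ge0 : 0 <= K)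
  (alpha_oo : series alpha @ \oo --> +oo) (beta_oo : series beta @ \oo --> +oo)
  (beta_f_cvg : cvgn (series (fun t => beta t * f t)))
  (alpha_e_cvg : cvgn (series (fun t => alpha t * e t ^+ 2)))
  (d_succ_le : forall t, d t.+1 <= e t)
  (d_step : forall t, d t.+1 <= d t + beta t * K).

Lemma d_lt_often (eps : R) s : 0 < eps -> exists t, (s <= t)%N /\ d t < eps.
Proof.
move=> eps_gt0.
have [t [st e_small]] := divergent_weight_lt_often alpha_ge0 alpha_oo alpha_e_cvg
  s (exprn_gt0 2 eps_gt0).
exists t.+1; split; first exact: leqW.
apply: le_lt_trans (d_succ_le t) _.
by rewrite -ltr_sqr ?nnegrE ?e_ge0 ?(ltW eps_gt0).
Qed.

(* [d] grows by at most [K beta] per step, so an excursion from [d < eps/4] to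
   [d >= eps/2] along which [f >= eps/2] has [beta]-length above [eps/(4K)] and adds
   more than [eps^2/(8K)] to [sum beta f], which its convergence rules out late
   enough. *)
Lemma f_add_d_lt_often (eps : R) N : 0 < eps -> exists t, (N <= t)%N /\ f t + d t < eps.
Proof.
move=> eps_gt0.
have K1_gt0 : 0 < K + 1 by have := K_ge0; lra.
pose c := eps ^+ 2 / (8 * (K + 1)).
have c_gt0 : 0 < c by rewrite divr_gt0 ?exprn_gt0 ?mulr_gt0.
have Kc_le : K * c <= eps ^+ 2 / 8.
  have -> : eps ^+ 2 / 8 = (K + 1) * c by rewrite /c; field; rewrite gt_eqF.
  by rewrite ler_wpM2r ?lerDl ?ltW.
have [N' bf_tail] := cvg_series_tail beta_f_cvg c_gt0.
have [t1 [Nt1 d_t1]] := d_lt_often (maxn N N') (divr_gt0 eps_gt0 (ltr0n R 4)).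
have f_often : exists n, (t1 <= n)%N && (f n < eps / 2).
  have [n [t1n fn]] := divergent_weight_lt_often beta_ge0 beta_oo beta_f_cvg
    t1 (divr_gt0 eps_gt0 (ltr0n R 2)).
  by exists n; rewrite t1n fn.
case: (ex_minnP f_often) => t2 /andP[t12 f_t2] t2_min.
have Nt2 : (N <= t2)%N by rewrite (leq_trans (leq_maxl _ N') (leq_trans Nt1 t12)).
exists t2; split => //.
rewrite ltNge; apply/negP => f_d_t2.
set B := \sum_(t1 <= t < t2) beta t.
have f_ge t : (t1 <= t < t2)%N -> eps / 2 <= f t.
  case/andP=> t1t tt2; rewrite leNgt; apply/negP => ft.
  by have := t2_min t; rewrite t1t ft leqNgt tt2 => /(_ isT).
have K_B : eps / 4 < K * B.
  have := ler_sum_increments d_step t12.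
  by rewrite -mulr_suml mulrC -/B; lra.
have eps_B : eps / 2 * B < c.
  have bf_small := bf_tail t1 t2 (leq_trans (leq_maxr N _) Nt1) t12.
  apply: le_lt_trans (le_lt_trans (ler_norm _) bf_small).
  rewrite mulr_sumr; apply: ler_sum_nat => t t_in.
  by rewrite mulrC ler_wpM2l // f_ge.
have : eps / 2 * (eps / 4) < eps / 2 * (K * B) by rewrite ltr_pM2l ?divr_gt0.
have : K * (eps / 2 * B) <= K * c by rewrite ler_wpM2l // ltW.
lra.
Qed.
End Excursion.

Section Cluster.
Variables (R : realType) (m : nat).

Lemma enorm_cluster_point (y : nat -> 'rV[R]_m) (r : R) :
  (forall k, enorm (y k) <= r) ->
  exists l, forall eta N, 0 < eta -> exists k, (N <= k)%N /\ enorm (l - y k) < eta.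
Proof.
move=> y_le.
pose A := closed_ball_ (@Num.Def.normr R 'rV[R]_m) 0 r.
have A_y k : A (y k).
  by rewrite /A /closed_ball_ /= sub0r normrN (le_trans (mx_norm_le_enorm _)).
have A_compact : compact A.
  apply: bounded_closed_compact; last exact: closed_closed_ball_.
  exists r; split=> [|M rM v]; first exact: num_real.
  by rewrite /A /closed_ball_ /= sub0r normrN => /le_trans; apply; exact: ltW.
have [l [_ l_clu]] : A `&` cluster (y @ \oo) !=set0.
  by apply: (A_compact (y @ \oo)); exists 0%N => // k _; exact: A_y.
exists l => eta N eta_gt0.
have c_gt0 : 0 < Num.sqrt m%:R + 1 :> R.
  by apply: ltr_wpDl; [exact: sqrtr_ge0|exact: ltr01].
have y_tail : (y @ \oo) [set v | exists k, (N <= k)%N /\ v = y k].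
  by exists N => // k Nk; exists k.
have [_ [[k [Nk ->]]]] := l_clu _ _ y_tail (nbhsx_ballx l _ (divr_gt0 eta_gt0 c_gt0)).
rewrite -ball_normE /ball_ /= => close.
exists k; split => //; apply: le_lt_trans (enorm_le_mx_norm _) _.
apply: le_lt_trans (_ : (Num.sqrt m%:R + 1) * `|l - y k| < eta).
  by rewrite ler_wpM2r ?lerDl.
by rewrite mulrC -ltr_pdivlMr.
Qed.

Lemma cluster_le0 (phi : 'rV[R]_m -> R) (L : R) (y : nat -> 'rV[R]_m) l :
  0 <= L -> (forall u v, phi u <= phi v + L * enorm (u - v)) ->
  (forall k, phi (y k) < k.+1%:R^-1) ->
  (forall eta N, 0 < eta -> exists k, (N <= k)%N /\ enorm (l - y k) < eta) ->
  phi l <= 0.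
Proof.
move=> L_ge0 phi_lip phi_y l_clu; rewrite leNgt; apply/negP => phi_l_gt0.
have L1_gt0 : 0 < L + 1 by lra.
have [k [Nk close]] := l_clu (phi l / (2 * (L + 1))) (Num.trunc (2 / phi l))
  (divr_gt0 phi_l_gt0 (mulr_gt0 (ltr0n R 2) L1_gt0)).
have inv_small : k.+1%:R^-1 < phi l / 2.
  rewrite invf_plt ?posrE ?divr_gt0 // invf_div.
  by apply: lt_le_trans (truncnS_gt _) _; rewrite ler_nat.
have : (L + 1) * enorm (l - y k) < phi l / 2.
  by rewrite mulrC -ltr_pdivlMr // -mulrA -invfM.
have := phi_lip l (y k); have := phi_y k; have := enorm_ge0 (l - y k).
move: inv_small; set u := k.+1%:R^-1; set e := enorm _.
nra.
Qed.

End Cluster.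

Lemma gplus_ge0 (R : realType) m (g : 'rV[R]_m -> R) y : 0 <= gplus g y.
Proof. by rewrite /gplus le_max lexx orbT. Qed.

Section Iteration.
Variables (R : realType) (m : nat) (g : 'rV[R]_m -> R) (X : set 'rV[R]_m)
  (Pj G : 'rV[R]_m -> 'rV[R]_m) (K : R) (alpha beta : nat -> R)
  (x : nat -> 'rV[R]_m).
Hypotheses (convX : convex_set X) (projP : is_projection X Pj)
  (subG : forall y, is_subgradient (gplus g) y (G y))
  (K_ge0 : 0 <= K) (G_le : forall y, enorm (G y) <= K)
  (alpha01 : forall t, 0 <= alpha t <= 1) (beta_ge0 : forall t, 0 <= beta t)
  (x_succ : forall t,
     let xi := x t - beta t *: G (x t) in
     let phi := alpha t *: (xi - Pj xi) in
     x t.+1 = xi - phi).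

Let distX y := enorm (y - Pj y).
Let xi t := x t - beta t *: G (x t).
Let descent t := 2 * beta t * gplus g (x t) + alpha t * distX (xi t) ^+ 2.

Lemma descent_ge0 t : 0 <= descent t.
Proof.
have /andP[alpha_ge0 _] := alpha01 t.
apply: addr_ge0; last by rewrite mulr_ge0 ?sqr_ge0.
by rewrite !mulr_ge0 ?gplus_ge0 ?ler0n.
Qed.

Lemma distX_succ_le t : distX (x t.+1) <= distX (xi t).
Proof.
have [/(projP (x t.+1)).2 le_dist _] := projP (xi t).
apply: le_trans le_dist _.
have /andP[alpha_ge0 alpha_le1] := alpha01 t.
rewrite (_ : x t.+1 - _ = (1 - alpha t) *: (xi t - Pj (xi t))); last first.
  by rewrite x_succ; row_ring.
by rewrite enormZ ger0_norm ?subr_ge0 // ler_piMl ?enorm_ge0 // gerBl.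
Qed.

Lemma distX_step t : distX (x t.+1) <= distX (x t) + beta t * K.
Proof.
apply: le_trans (distX_succ_le t) _.
apply: le_trans (dist_proj_lipschitz projP _ (x t)) _.
rewrite lerD2l (_ : xi t - x t = - (beta t *: G (x t))); last by row_ring.
by rewrite enormN enormZ ger0_norm // ler_wpM2l.
Qed.

Lemma fejer_step z t : X z -> g z <= 0 ->
  dotv (x t.+1 - z) (x t.+1 - z)
    <= dotv (x t - z) (x t - z) - descent t + beta t ^+ 2 * K ^+ 2.
Proof.
move=> Xz gz_le0.
have gplus_z : gplus g z = 0 by rewrite /gplus max_r.
have GG_le : dotv (G (x t)) (G (x t)) <= K ^+ 2.
  by rewrite -sqr_enorm ler_sqr ?nnegrE ?enorm_ge0.
have := subgradient_step z (subG (x t)) (beta_ge0 t).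
have := relaxed_proj_fejer projP convX (xi t) Xz (alpha01 t).
rewrite -x_succ -/(xi t) gplus_z /descent /distX sqr_enorm.
have := ler_wpM2l (sqr_ge0 (beta t)) GG_le.
lra.
Qed.

Lemma fejer_sum z n : X z -> g z <= 0 ->
  dotv (x n - z) (x n - z) + \sum_(0 <= t < n) descent t
    <= dotv (x 0 - z) (x 0 - z) + \sum_(0 <= t < n) beta t ^+ 2 * K ^+ 2.
Proof.
move=> Xz gz_le0.
pose u n := dotv (x n - z) (x n - z) + \sum_(0 <= t < n) descent t.
have u_incr t : u t.+1 <= u t + beta t ^+ 2 * K ^+ 2.
  by rewrite /u big_nat_recr //=; have := fejer_step t Xz gz_le0; lra.
have := ler_sum_increments u_incr (leq0n n).
by rewrite /u [\sum_(0 <= t < 0) _]big_geq // addr0.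
Qed.

Lemma fejer_tail z s n : X z -> g z <= 0 -> (s <= n)%N ->
  dotv (x n - z) (x n - z)
    <= dotv (x s - z) (x s - z) + \sum_(s <= t < n) beta t ^+ 2 * K ^+ 2.
Proof.
move=> Xz gz_le0.
apply: (ler_sum_increments (u := fun n => dotv (x n - z) (x n - z))) => t.
by have := fejer_step t Xz gz_le0; have := descent_ge0 t; lra.
Qed.

Variable z0 : 'rV[R]_m.
Hypotheses (Xz0 : X z0) (gz0_le0 : g z0 <= 0)
  (beta2_cvg : cvgn (series (fun t => beta t ^+ 2))).

Lemma beta2K2_cvg : cvgn (series (fun t => beta t ^+ 2 * K ^+ 2)).
Proof.
rewrite (_ : (fun t => _) = K ^+ 2 *: (fun t => beta t ^+ 2)).
  exact: is_cvg_seriesZ.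
by apply/funext => t; rewrite /= mulrC.
Qed.

Let C := dotv (x 0 - z0) (x 0 - z0) + limn (series (fun t => beta t ^+ 2 * K ^+ 2)).

Lemma fejer_bound n : dotv (x n - z0) (x n - z0) + \sum_(0 <= t < n) descent t <= C.
Proof.
apply: le_trans (fejer_sum n Xz0 gz0_le0) _; rewrite lerD2l.
apply: (nondecreasing_cvgn_le _ beta2K2_cvg n).
by apply: nondecreasing_series => t _ _; rewrite mulr_ge0 ?sqr_ge0.
Qed.

Lemma descent_cvg : cvgn (series descent).
Proof.
apply: nondecreasing_is_cvgn.
  by apply: nondecreasing_series => t _ _; exact: descent_ge0.
exists C => _ [n _ <-]; have := fejer_bound n; have := dotvv_ge0 (x n - z0).
by rewrite /series /=; lra.
Qed.

Lemma x_bounded t : enorm (x t) <= Num.sqrt C + enorm z0.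
Proof.
rewrite -[x t](subrK z0); apply: le_trans (ler_enormD _ _) _; rewrite lerD2r.
have bound := fejer_bound t; have dx_ge0 := dotvv_ge0 (x t - z0).
have descent_sum_ge0 : 0 <= \sum_(0 <= i < t) descent i.
  by apply: sumr_ge0 => i _; exact: descent_ge0.
by rewrite /enorm ler_sqrt; lra.
Qed.

Hypotheses (alpha_oo : series alpha @ \oo --> +oo) (beta_oo : series beta @ \oo --> +oo).

Lemma gplus_dist_lt_often eps N : 0 < eps ->
  exists t, (N <= t)%N /\ gplus g (x t) + distX (x t) < eps.
Proof.
have alpha_ge0 t : 0 <= alpha t by have /andP[] := alpha01 t.
have descent_ge t :
    beta t * gplus g (x t) <= descent t /\ alpha t * distX (xi t) ^+ 2 <= descent t.
  have := mulr_ge0 (beta_ge0 t) (gplus_ge0 g (x t)).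
  have := mulr_ge0 (alpha_ge0 t) (sqr_ge0 (distX (xi t))).
  by rewrite /descent; lra.
apply: (f_add_d_lt_often (alpha := alpha) (e := fun t => distX (xi t))
  alpha_ge0 beta_ge0 (fun t => enorm_ge0 _) K_ge0 alpha_oo beta_oo _ _
  distX_succ_le distX_step).
- apply: series_le_cvg descent_cvg => t; last exact: (descent_ge t).1.
    exact: mulr_ge0 (gplus_ge0 _ _).
  exact: descent_ge0.
- apply: series_le_cvg descent_cvg => t; last exact: (descent_ge t).2.
    exact: mulr_ge0 (sqr_ge0 _).
  exact: descent_ge0.
Qed.

Lemma feasible_cluster_point : exists2 l, X l /\ g l <= 0 &
  forall eta N, 0 < eta -> exists t, (N <= t)%N /\ enorm (x t - l) < eta.
Proof.
have inv_gt0 k : 0 < k.+1%:R^-1 :> R by rewrite invr_gt0 ltr0n.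
have [tk tk_spec] := choice (fun k => gplus_dist_lt_often k (inv_gt0 k)).
have [l l_clu] := enorm_cluster_point (fun k => x_bounded (tk k)).
have phi_l_le0 : gplus g l + distX l <= 0.
  apply: (cluster_le0 (phi := fun y => gplus g y + distX y) (L := K + 1) _ _
    (fun k => (tk_spec k).2) l_clu).
    by have := K_ge0; lra.
  move=> u v; have := subgradient_lipschitz subG G_le u v.
  by have := dist_proj_lipschitz projP u v; rewrite /distX; lra.
have distX_ge0 : 0 <= distX l by exact: enorm_ge0.
have gplus_l_ge0 := gplus_ge0 g l.
have distX_l : distX l = 0 by lra.
have gplus_l : gplus g l <= 0 by lra.
exists l; first split.
- by move/eqP: distX_l; rewrite enorm_eq0 subr_eq0 => /eqP ->; exact: (projP l).1.
- by move: gplus_l; rewrite /gplus ge_max => /andP[].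
move=> eta N eta_gt0; have [k [Nk close]] := l_clu eta N eta_gt0.
by exists (tk k); split; [exact: leq_trans Nk (tk_spec k).1|rewrite enorm_distC].
Qed.

Lemma iterates_cvg : exists xs, (X xs /\ g xs <= 0) /\
  (fun t => enorm (x t - xs)) @ \oo --> (0 : R).
Proof.
have [l [Xl gl_le0] l_clu] := feasible_cluster_point.
exists l; split => //.
have sqr_dist_cvg : (fun t => dotv (x t - l) (x t - l)) @ \oo --> 0.
  apply: (quasi_fejer_cvg0 (b := fun t => beta t ^+ 2 * K ^+ 2)).
  - by move=> t; exact: dotvv_ge0.
  - exact: beta2K2_cvg.
  - by move=> s t; exact: fejer_tail.
  move=> e N e_gt0.
  have sqrt_e_gt0 : 0 < Num.sqrt e by rewrite sqrtr_gt0.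
  have [t [Nt close]] := l_clu (Num.sqrt e) N sqrt_e_gt0.
  exists t; split => //; rewrite -sqr_enorm -(sqr_sqrtr (ltW e_gt0)).
  by rewrite ltr_sqr ?nnegrE ?enorm_ge0 ?sqrtr_ge0.
rewrite -[X in _ --> X]sqrtr0.
exact: (continuous_cvg _ (@sqrt_continuous R 0) sqr_dist_cvg).
Qed.
End Iteration.

Theorem theorem2 (R : realType) (m : nat)
  (g : 'rV[R]_m -> R) (X : set 'rV[R]_m)
  (Pj : 'rV[R]_m -> 'rV[R]_m) (G : 'rV[R]_m -> 'rV[R]_m) (K : R)
  (alpha beta : nat -> R) (x : nat -> 'rV[R]_m) :
  continuous g -> convex_fun g ->
  closed X -> convex_set X ->
  (exists y, X y /\ g y <= 0) ->
  is_projection X Pj ->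
  (forall y, is_subgradient (gplus g) y (G y)) ->
  0 <= K -> (forall y, enorm (G y) <= K) ->
  (forall t, 0 <= alpha t <= 1) ->
  series alpha @ \oo --> +oo ->
  cvgn (series (fun t => alpha t ^+ 2)) ->
  (forall t, 0 <= beta t) ->
  series beta @ \oo --> +oo ->
  cvgn (series (fun t => beta t ^+ 2)) ->
  (forall t,
     let xi := x t - beta t *: G (x t) in
     let phi := alpha t *: (xi - Pj xi) in
     x t.+1 = xi - phi) ->
  exists xs, (X xs /\ g xs <= 0) /\
    (fun t => enorm (x t - xs)) @ \oo --> (0 : R).
Proof.
move=> _ _ _ convX [z0 [Xz0 gz0_le0]] projP subG K_ge0 G_le alpha01 alpha_oo _
  beta_ge0 beta_oo beta2_cvg x_succ.
exact: (iterates_cvg convX projP subG K_ge0 G_le alpha01 beta_ge0 x_succ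
  Xz0 gz0_le0 beta2_cvg alpha_oo beta_oo).
Qed.
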